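(* Let $\mathfrak g\xrightarrow{\mu}\mathfrak h$ be a crossed module of Lie algebras, $\phi:W\to V$ linear, $\rho$ a 2-representation on $\phi$, $r\ge1$ and $\omega\in C^{p,q}_r(\mathfrak g_1,\phi)$. Then $(\partial\Delta+\Delta\partial)\omega=0\in C^{p+2,q+1}_{r-1}(\mathfrak g_1,\phi)$.
   Context: Crossed module: Lie algebras $\mathfrak g,\mathfrak h$, Lie homomorphism $\mu$, action $\mathcal L:\mathfrak h\to\mathrm{Der}(\mathfrak g)$ with $\mu(\mathcal L_yx)=[y,\mu(x)]$, $\mathcal L_{\mu(x_0)}x_1=[x_0,x_1]$. 2-representation: linear $\rho_0^1:\mathfrak h\to\mathfrak{gl}(W)$, $\rho_0^0:\mathfrak h\to\mathfrak{gl}(V)$, $\rho_1:\mathfrak g\to\mathrm{Hom}(V,W)$ satisfying the usual axioms (representations, $\phi\rho_0^1(y)=\rho_0^0(y)\phi$, $\rho_1([x_0,x_1])=\rho_1(x_0)\phi\rho_1(x_1)-\rho_1(x_1)\phi\rho_1(x_0)$, $\rho_0^0(\mu(x))=\phi\rho_1(x)$, $\rho_0^1(\mu(x))=\rho_1(x)\phi$, $\rho_1(\mathcal L_yx)=\rho_0^1(y)\rho_1(x)-\rho_1(x)\rho_0^0(y)$). $\mathfrak g_0=\mathfrak h$; for $p\ge1$, $\mathfrak g_p=\mathfrak g^p\oplus\mathfrak h$, elements $(x^0,\dots,x^{p-1};y)$ (composable strings of arrows of $\mathfrak g\oplus_{\mathcal L}\mathfrak h$, a Lie algebra with componentwise bracket).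 Face maps $\partial_k:\mathfrak g_{p+1}\to\mathfrak g_p$, $0\le k\le p+1$: $\partial_0(x^0,\dots,x^p;y)=(x^1,\dots,x^p;y)$, $\partial_k(\dots)=(x^0,\dots,x^{k-1}+x^k,\dots,x^p;y)$ ($0<k\le p$), $\partial_{p+1}(\dots)=(x^0,\dots,x^{p-1};y+\mu(x^p))$, componentwise on tuples. $X(j)$: removal of the $j$th entry. $C^{p,q}_r=\bigwedge^q\mathfrak g_p^*\otimes\bigwedge^r\mathfrak g^*\otimes W$ ($r\ge1$), $C^{p,q}_0=\bigwedge^q\mathfrak g_p^*\otimes V$, elements $\omega(\Xi;Z)$. $\partial:C^{p,q}_r\to C^{p+1,q}_r$, $\partial\omega(\Xi;Z)=\sum_{k=0}^{p+1}(-1)^k\omega(\partial_k\Xi;Z)$. $\Delta:C^{p,q}_r\to C^{p+1,q+1}_{r-1}$ ($r\ge1$): for $\Xi=(\xi_0,\dots,\xi_q)\in\mathfrak g_{p+1}^{q+1}$, $\xi_j=(x_j^0,\dots,x_j^p;y_j)$, $\Delta\omega(\Xi;Z)=\sum_j(-1)^j\omega(\partial_0\Xi(j);x_j^0,Z)$, composed with $\phi$ when $r=1$. *)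

From mathcomp Require Import all_boot all_algebra.
Set Implicit Arguments. Unset Strict Implicit. Unset Printing Implicit Defensive.
Import GRing.Theory.
Local Open Scope ring_scope.

Section Defs.
Variable K : fieldType.

Definition is_lie_bracket (L : lmodType K) (b : L -> L -> L) : Prop :=
  [/\ (forall y, linear (fun x => b x y)),
      (forall x, linear (b x)),
      (forall x, b x x = 0) &
      (forall x y z, b x (b y z) + b y (b z x) + b z (b x y) = 0)].

Definition lie_hom (L1 L2 : lmodType K) (b1 : L1 -> L1 -> L1) (b2 : L2 -> L2 -> L2)
  (f : L1 -> L2) : Prop :=
  linear f /\ forall x y, f (b1 x y) = b2 (f x) (f y).

Definition crossed_module (g h : lmodType K) (bg : g -> g -> g) (bh : h -> h -> h)
  (mu : g -> h) (Lc : h -> g -> g) : Prop :=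
  is_lie_bracket bg /\ is_lie_bracket bh /\ lie_hom bg bh mu /\
      (* Lc : h -> Der(g) is a (linear) Lie algebra homomorphism *)
      (forall x, linear (fun y => Lc y x)) /\
      (forall y, linear (Lc y)) /\
      (forall y x1 x2, Lc y (bg x1 x2) = bg (Lc y x1) x2 + bg x1 (Lc y x2)) /\
      (forall y1 y2 x, Lc (bh y1 y2) x = Lc y1 (Lc y2 x) - Lc y2 (Lc y1 x)) /\
      (forall y x, mu (Lc y x) = bh y (mu x)) /\
      (forall x0 x1, Lc (mu x0) x1 = bg x0 x1).

Definition two_rep (g h : lmodType K) (bg : g -> g -> g) (bh : h -> h -> h)
  (mu : g -> h) (Lc : h -> g -> g) (W V : lmodType K) (phi : W -> V)
  (rho01 : h -> W -> W) (rho00 : h -> V -> V) (rho1 : g -> V -> W) : Prop :=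
      ((forall w, linear (fun y => rho01 y w)) /\ (forall y, linear (rho01 y)) /\
       (forall v, linear (fun y => rho00 y v)) /\ (forall y, linear (rho00 y)) /\
       (forall v, linear (fun x => rho1 x v)) /\ (forall x, linear (rho1 x))) /\
      (forall y1 y2 w, rho01 (bh y1 y2) w = rho01 y1 (rho01 y2 w) - rho01 y2 (rho01 y1 w)) /\
      (forall y1 y2 v, rho00 (bh y1 y2) v = rho00 y1 (rho00 y2 v) - rho00 y2 (rho00 y1 v)) /\
      (forall y w, phi (rho01 y w) = rho00 y (phi w)) /\
      (forall x0 x1 v, rho1 (bg x0 x1) v
                       = rho1 x0 (phi (rho1 x1 v)) - rho1 x1 (phi (rho1 x0 v))) /\
      (forall x v, rho00 (mu x) v = phi (rho1 x v)) /\
      (forall x w, rho01 (mu x) w = rho1 x (phi w)) /\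
      (forall y x v, rho1 (Lc y x) v = rho01 y (rho1 x v) - rho1 x (rho00 y v)).

Variables (g h : lmodType K) (mu : g -> h).

(* g_p = g^p (+) h ; for p = 0 this is h (with a trivial g^0 component).
   An element (x^0,...,x^{p-1}; y) is the pair ([ffun i => x^i], y). *)
Definition gp (p : nat) : lmodType K := ({ffun 'I_p -> g} * h)%type.

Definition face (p k : nat) (xi : gp p.+1) : gp p :=
  let x := xi.1 in let y := xi.2 in
  if k == 0%N then ([ffun i : 'I_p => x (lift ord0 i)], y)
  else if (k <= p)%N then
    ([ffun i : 'I_p =>
        if (i.+1 < k)%N then x (widen_ord (leqnSn p) i)
        else if (i.+1 == k)%N then x (widen_ord (leqnSn p) i) + x (lift ord0 i)
        else x (lift ord0 i)], y)
  else ([ffun i : 'I_p => x (widen_ord (leqnSn p) i)], y + mu (x ord_max)).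

Definition faceT (p k q : nat) (Xi : 'I_q -> gp p.+1) : 'I_q -> gp p :=
  fun j => face k (Xi j).

Definition remove (T : Type) (q : nat) (j : 'I_q.+1) (X : 'I_q.+1 -> T) : 'I_q -> T :=
  fun i => X (lift j i).

Definition consZ (T : Type) (r : nat) (x : T) (Z : 'I_r -> T) : 'I_r.+1 -> T :=
  fun i => if unlift ord0 i is Some i' then Z i' else x.

Definition setI (T : Type) (n : nat) (X : 'I_n -> T) (i : 'I_n) (x : T) : 'I_n -> T :=
  fun j => if j == i then x else X j.

Variables (W V : lmodType K) (phi : W -> V).

Definition Cod (r : nat) : lmodType K := if r is 0 then V else W.

(* raw cochain: omega(Xi; Z) with Xi in g_p^q, Z in g^r *)
Definition cochain (p q r : nat) := ('I_q -> gp p) -> ('I_r -> g) -> Cod r.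

Definition multilin_alt (U : lmodType K) (n : nat) (Y : lmodType K) (f : ('I_n -> U) -> Y) :=
  (forall (X : 'I_n -> U) (i : 'I_n), linear (fun x => f (setI X i x))) /\
  (forall (X : 'I_n -> U) (i j : 'I_n), i != j -> X i = X j -> f X = 0).

(* omega is in C^{p,q}_r = /\^q g_p^* (x) /\^r g^* (x) W  (resp. /\^q g_p^* (x) V if r = 0) *)
Definition in_C (p q r : nat) (om : cochain p q r) : Prop :=
  (forall Z, multilin_alt (fun Xi => om Xi Z)) /\
  (forall Xi, multilin_alt (om Xi)).

Definition dH (p q r : nat) (om : cochain p q r) : cochain p.+1 q r :=
  fun Xi Z => \sum_(k < p.+2) (-1) ^+ k *: om (faceT k Xi) Z.

Definition toCod (r : nat) : W -> Cod r :=
  match r return W -> Cod r with 0 => phi | _.+1 => fun w => w end.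

(* Delta : C^{p,q}_{r+1} -> C^{p+1,q+1}_r  (composed with phi when the target is r = 0) *)
Definition Delta (p q r : nat) (om : cochain p q r.+1) : cochain p.+1 q.+1 r :=
  fun Xi Z => toCod r (\sum_(j < q.+1)
      (-1) ^+ j *: om (faceT 0 (remove j Xi)) (consZ ((Xi j).1 ord0) Z)).

End Defs.

(* Delta reads only the first arrow x^0 of each argument and then applies the face d_0.
   The simplicial identity d_0 d_(k+1) = d_k d_0 matches the k-th term of d(Delta om)
   with the (k-1)-st term of Delta(d om), and for k >= 2 the face d_k leaves the first
   arrow unchanged, so these terms cancel.  The first arrow of d_1 xi is x^0 + x^1, so by
   additivity of om in its first g-slot the terms k = 0, 1 of d(Delta om) add up to minus
   the term k = 0 of Delta(d om).  Neither the brackets nor the 2-representation enter. *)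

From HB Require Import structures.
From Pilot Require Import Defs.
From mathcomp Require Import all_boot all_algebra.
From Stdlib Require Import FunctionalExtensionality.
Import GRing.Theory.
Local Open Scope ring_scope.

Lemma alternating_sums_cancel (R : pzRingType) (M : lmodType R) (A B : nat -> M) n :
  A 0%N - A 1%N + B 0%N = 0 -> (forall k, (k < n)%N -> A k.+2 = B k.+1) ->
  \sum_(k < n.+2) (-1) ^+ k *: A k + \sum_(k < n.+1) (-1) ^+ k *: B k = 0.
Proof.
move=> AB0 ABS; rewrite !big_ord_recl expr1 scaleN1r !expr0 !scale1r.
rewrite (eq_bigr (fun i : 'I_n => - ((-1) ^+ i.+1 *: B i.+1))); last first.
  by move=> i _; rewrite !lift0 ABS // exprS mulN1r scaleNr.
by rewrite sumrN addrACA addrNK addrAC.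
Qed.

Lemma widenS_lift0 n (i : 'I_n) :
  widen_ord (leqnSn n.+1) (lift ord0 i) = lift ord0 (widen_ord (leqnSn n) i).
Proof. exact: val_inj. Qed.

Lemma setI_consZ0 (T : Type) r (Z : 'I_r -> T) (x0 x : T) :
  Defs.setI (consZ x0 Z) ord0 x = consZ x Z.
Proof.
apply: functional_extensionality => i; rewrite /Defs.setI /consZ.
by case: unliftP => [j ->|->].
Qed.

Lemma multilin_alt_consD (K : fieldType) (U Y : lmodType K) r
    (f : ('I_r.+1 -> U) -> Y) (Z : 'I_r -> U) a b :
  multilin_alt f -> f (consZ (a + b) Z) = f (consZ a Z) + f (consZ b Z).
Proof.
case=> f_lin _; have := f_lin (consZ 0 Z) ord0 1 a b.
by rewrite !setI_consZ0 !scale1r.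
Qed.

Section SimplicialCochains.
Variables (K : fieldType) (g h : lmodType K) (mu : g -> h).

Lemma face0_face p k (xi : gp g h p.+2) : (k < p.+2)%N ->
  face mu 0 (face mu k.+1 xi) = face mu k (face mu 0 xi).
Proof.
case: xi => x y; rewrite ltnS leq_eqVlt => /orP[/eqP-> | lt_kp].
  rewrite /face /= !ltnn; congr pair; first apply/ffunP => i.
    by rewrite !ffunE /= widenS_lift0.
  by rewrite /= ffunE; congr (_ + mu (x _)); apply: val_inj.
rewrite /face /= lt_kp (lt_kp : (k <= p)%N).
case: eqP => [-> | _] /=; congr pair; apply/ffunP => i; rewrite !ffunE //.
by rewrite lift0 ltnS eqSS widenS_lift0.
Qed.

Lemma faceT0_faceT p q k (Xi : 'I_q -> gp g h p.+2) : (k < p.+2)%N ->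
  faceT mu 0 (faceT mu k.+1 Xi) = faceT mu k (faceT mu 0 Xi).
Proof. by move=> lt_kp; apply: functional_extensionality => j; exact: face0_face. Qed.

Lemma face_ord0 p k (xi : gp g h p.+2) : (1 < k)%N ->
  (face mu k xi).1 ord0 = xi.1 ord0.
Proof.
case: xi => x y lt1k; rewrite /face /= gtn_eqF ?(ltnW lt1k) //.
have widen0 : widen_ord (leqnSn p.+1) ord0 = ord0 by exact: val_inj.
by case: ifP => _; rewrite ffunE /= ?(ifT _ _ lt1k) widen0.
Qed.

Lemma face1_ord0 p (xi : gp g h p.+2) :
  (face mu 1 xi).1 ord0 = xi.1 ord0 + (face mu 0 xi).1 ord0.
Proof.
by case: xi => x y; rewrite /face /= !ffunE /=; congr (x _ + x _); apply: val_inj.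
Qed.

Variables (W V : lmodType K) (phi : W -> V).
Hypothesis phi_linear : linear phi.

Lemma alternating_face_sums_cancel p q r (om : cochain g h W V p q r.+1)
    (Y : 'I_q -> gp g h p.+2) (xi : gp g h p.+2) (Z : 'I_r -> g) :
  in_C om ->
  \sum_(k < p.+3) (-1) ^+ k *: om (faceT mu 0 (faceT mu k Y)) (consZ ((face mu k xi).1 ord0) Z)
  + \sum_(k < p.+2) (-1) ^+ k *: om (faceT mu k (faceT mu 0 Y)) (consZ (xi.1 ord0) Z) = 0.
Proof.
case=> _ om_multilin.
pose A k := om (faceT mu 0 (faceT mu k Y)) (consZ ((face mu k xi).1 ord0) Z).
pose B k := om (faceT mu k (faceT mu 0 Y)) (consZ (xi.1 ord0) Z).
apply: (@alternating_sums_cancel _ _ A B) => [|k lt_kp]; rewrite /A /B.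
  rewrite faceT0_faceT // face1_ord0 multilin_alt_consD //.
  by rewrite opprD addrA addrAC subrK subrr.
by rewrite faceT0_faceT // face_ord0.
Qed.

Lemma toCod_linear r : linear (toCod phi r).
Proof. by case: r. Qed.

HB.instance Definition _ r :=
  GRing.isLinear.Build K W (Cod W V r) *:%R (toCod phi r) (toCod_linear r).

Lemma dH_Delta_anticommute p q r (om : cochain g h W V p q r.+1) : in_C om ->
  forall Xi Z, dH mu (Delta mu phi om) Xi Z + Delta mu phi (dH mu om) Xi Z = 0.
Proof.
move=> om_C Xi Z; rewrite /dH /Delta.
under eq_bigr do rewrite -linearZ.
rewrite -linear_sum -linearD.
under eq_bigr do rewrite scaler_sumr.
rewrite exchange_big -big_split big1 ?linear0 // => j _ /=.
under eq_bigr do rewrite scalerA mulrC -scalerA.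
by rewrite -scaler_sumr -scalerDr alternating_face_sums_cancel ?scaler0.
Qed.

End SimplicialCochains.

Theorem mainTheorem11 (K : fieldType) (g h : lmodType K)
  (bg : g -> g -> g) (bh : h -> h -> h) (mu : g -> h) (Lc : h -> g -> g)
  (W V : lmodType K) (phi : W -> V)
  (rho01 : h -> W -> W) (rho00 : h -> V -> V) (rho1 : g -> V -> W)
  (p q r : nat) (om : cochain g h W V p q r.+1) :
  crossed_module bg bh mu Lc ->
  linear phi ->
  two_rep bg bh mu Lc phi rho01 rho00 rho1 ->
  in_C om ->
  forall (Xi : 'I_q.+1 -> gp g h p.+2) (Z : 'I_r -> g),
    dH mu (Delta mu phi om) Xi Z + Delta mu phi (dH mu om) Xi Z = 0.
Proof. by move=> _ phi_linear _; exact: dH_Delta_anticommute. Qed.
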